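(* Let $R$ be a ring such that the injective hull $E(R_R)$ is a projective right $R$-module. Then $R$ is right dual Kasch if and only if every right $R$-module of finite length is a homomorphic image of an injective right $R$-module.
   Context: $R$ is right dual Kasch if every simple right $R$-module is a homomorphic image of an injective right $R$-module. *)

From HB Require Import structures.
From mathcomp Require Import all_boot all_algebra.
Set Implicit Arguments. Unset Strict Implicit. Unset Printing Implicit Defensive.
Import GRing.Theory.
Local Open Scope ring_scope.

(* Right R-modules are encoded as left modules over the converse ring R^c:
   for M : rmodType R, the right action m . r is  r *: m. *)
Notation rmodType R := (lmodType (R^c)%type).

(* The regular right module R_R : carrier R, with  r *: x = x * r. *)
Notation regular_rmod R := ((R^c)^o)%type.

Section ModuleNotions.
Variable S : pzRingType.

Definition is_submod (M : lmodType S) (N : {pred M}) : Prop := submod_closed N.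

Definition injective_mod (E : lmodType S) : Prop :=
  forall (A B : lmodType S) (f : {linear A -> B}) (g : {linear A -> E}),
    injective f -> exists h : {linear B -> E}, forall a, h (f a) = g a.

Definition projective_mod (P : lmodType S) : Prop :=
  forall (B C : lmodType S) (g : {linear B -> C}) (f : {linear P -> C}),
    (forall c, exists b, g b = c) -> exists h : {linear P -> B}, forall p, g (h p) = f p.

Definition essential_mono (M E : lmodType S) (i : {linear M -> E}) : Prop :=
  injective i /\
  forall N : {pred E}, is_submod N ->
    (forall x, x \in N -> (exists m, i m = x) -> x = 0) ->
    forall x, x \in N -> x = 0.

Definition injective_hull (M E : lmodType S) (i : {linear M -> E}) : Prop :=
  injective_mod E /\ essential_mono i.

Definition simple_mod (M : lmodType S) : Prop :=
  (exists x : M, x <> 0) /\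
  forall N : {pred M}, is_submod N ->
    (forall x, x \in N -> x = 0) \/ (forall x, x \in N).

(* A composition series: 0 = s 0 < s 1 < ... < s n = M with every
   s i a maximal proper submodule of s (i+1) (i.e. s(i+1)/s i simple). *)
Definition finite_length (M : lmodType S) : Prop :=
  exists (n : nat) (s : nat -> {pred M}),
    [/\ (forall i, is_submod (s i)),
        (forall x, x \in s 0%N -> x = 0),
        (forall x, x \in s n) &
        forall i, (i < n)%N ->
          [/\ {subset s i <= s i.+1},
              (exists x, x \in s i.+1 /\ x \notin s i) &
              forall N : {pred M}, is_submod N ->
                {subset s i <= N} -> {subset N <= s i.+1} ->
                N =i s i \/ N =i s i.+1]].

Definition image_of_injective (M : lmodType S) : Prop :=
  exists (E : lmodType S) (f : {linear E -> M}),
    injective_mod E /\ forall m, exists e, f e = m.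

End ModuleNotions.

Definition right_dual_Kasch (R : nzRingType) : Prop :=
  forall M : rmodType R, simple_mod M -> image_of_injective M.

From HB Require Import structures.
From mathcomp Require Import all_boot all_algebra.
From mathcomp Require Import boolp.
Set Implicit Arguments. Unset Strict Implicit. Unset Printing Implicit Defensive.
Import GRing.Theory.
Local Open Scope ring_scope.

(* A simple module has finite length, so one direction is immediate.  For the
   other, let E be injective and projective with R <= E, and climb a
   composition series 0 = s_0 < ... < s_n = M, covering each s_k by the image
   of an injective module P.  If s_(k+1) = s_k + xR, then s_(k+1)/s_k is the
   simple module R/I with I = (s_k : x), hence an image of some injective E'.
   Mapping 1 to a preimage of 1 + I in E' extends to E -> E', and projectivity
   of E lifts E -> E' ->> R/I to h : E -> R with h 1 in 1 + I.  Then
   (p, e) |-> g p + x h(e) maps the injective module P * E onto s_(k+1). *)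

Section QuotientModule.
Variables (S : pzRingType) (M : lmodType S) (N : {pred M}).
Hypothesis N_submod : submod_closed N.
HB.instance Definition _ := GRing.isSubmodClosed.Build S M N N_submod.

Lemma qrepr_subproof (x : M) : exists y, y - x \in N.
Proof. by exists x; rewrite subrr rpred0. Qed.

Definition qrepr (x : M) : M := xchoose (qrepr_subproof x).

Lemma qreprP x : qrepr x - x \in N.
Proof. exact: (xchooseP (qrepr_subproof x)). Qed.

Lemma eq_qrepr x y : x - y \in N -> qrepr x = qrepr y.
Proof.
move=> Nxy; apply: eq_xchoose => z; apply/idP/idP => Nz.
- by have := rpredD Nz Nxy; rewrite addrA subrK.
- by have := rpredB Nz Nxy; rewrite opprB addrA subrK.
Qed.

Lemma qreprK x : qrepr (qrepr x) = qrepr x.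
Proof. exact/eq_qrepr/qreprP. Qed.

Definition quotmod := {x : M | qrepr x == x}.
HB.instance Definition _ := Choice.on quotmod.

Definition qproj (x : M) : quotmod := exist _ (qrepr x) (introT eqP (qreprK x)).

Lemma qproj_eqP x y : qproj x = qproj y <-> x - y \in N.
Proof.
split=> [/(congr1 val) /= exy | /eq_qrepr exy]; last exact: val_inj.
by have := rpredB (qreprP y) (qreprP x); rewrite exy opprB addrC addrA subrK.
Qed.

Lemma qprojK (q : quotmod) : qproj (val q) = q.
Proof. by case: q => x qx; apply: val_inj; apply/eqP. Qed.

Lemma quotmod_ind (P : quotmod -> Prop) : (forall x, P (qproj x)) -> forall q, P q.
Proof. by move=> Pq q; rewrite -(qprojK q). Qed.

Definition qzero := qproj 0.
Definition qopp (a : quotmod) := qproj (- val a).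
Definition qadd (a b : quotmod) := qproj (val a + val b).
Definition qscale (r : S) (a : quotmod) := qproj (r *: val a).

Lemma qaddE x y : qadd (qproj x) (qproj y) = qproj (x + y).
Proof. by apply/qproj_eqP; rewrite opprD addrACA rpredD ?qreprP. Qed.

Lemma qoppE x : qopp (qproj x) = qproj (- x).
Proof. by apply/qproj_eqP; rewrite opprK addrC -opprB rpredN qreprP. Qed.

Lemma qscaleE r x : qscale r (qproj x) = qproj (r *: x).
Proof. by apply/qproj_eqP; rewrite -scalerBr rpredZ ?qreprP. Qed.

Lemma qaddA : associative qadd.
Proof.
by elim/quotmod_ind=> x; elim/quotmod_ind=> y; elim/quotmod_ind=> z; rewrite !qaddE addrA.
Qed.

Lemma qaddC : commutative qadd.
Proof. by elim/quotmod_ind=> x; elim/quotmod_ind=> y; rewrite !qaddE addrC. Qed.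

Lemma qadd0 : left_id qzero qadd.
Proof. by elim/quotmod_ind=> x; rewrite qaddE add0r. Qed.

Lemma qaddN : left_inverse qzero qopp qadd.
Proof. by elim/quotmod_ind=> x; rewrite qoppE qaddE addNr. Qed.

HB.instance Definition _ := GRing.isZmodule.Build quotmod qaddA qaddC qadd0 qaddN.

Lemma qscaleA a b : forall v, qscale a (qscale b v) = qscale (a * b) v.
Proof. by elim/quotmod_ind=> x; rewrite !qscaleE scalerA. Qed.

Lemma qscale1 : left_id 1 qscale.
Proof. by elim/quotmod_ind=> x; rewrite qscaleE scale1r. Qed.

Lemma qscaleDr : right_distributive qscale qadd.
Proof.
by move=> a; elim/quotmod_ind=> x; elim/quotmod_ind=> y; rewrite qaddE !qscaleE qaddE scalerDr.
Qed.

Lemma qscaleDl v : {morph qscale^~ v : a b / a + b >-> qadd a b}.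
Proof. by elim/quotmod_ind: v => x a b; rewrite !qscaleE qaddE scalerDl. Qed.

HB.instance Definition _ :=
  GRing.Zmodule_isLmodule.Build S quotmod qscaleA qscale1 qscaleDr qscaleDl.

Lemma qproj_is_linear : linear qproj.
Proof.
move=> r x y; change (qproj (r *: x + y) = qadd (qscale r (qproj x)) (qproj y)).
by rewrite qscaleE qaddE.
Qed.

HB.instance Definition _ := GRing.isLinear.Build S M quotmod *:%R qproj qproj_is_linear.

Lemma qproj_eq0 x : qproj x = 0 <-> x \in N.
Proof. by rewrite -[0]/(qproj 0) qproj_eqP subr0. Qed.

End QuotientModule.


Section LinearMaps.
Variable S : pzRingType.

Definition scalev (V : lmodType S) (v : V) : S^o -> V := fun r : S => r *: v.

Lemma scalev_is_linear (V : lmodType S) (v : V) : linear (scalev v).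
Proof. by move=> a r s; rewrite /scalev scalerDl scalerA. Qed.

HB.instance Definition _ (V : lmodType S) (v : V) :=
  GRing.isLinear.Build S S^o V *:%R (scalev v) (scalev_is_linear v).

Lemma scalev1 (V : lmodType S) (v : V) : scalev v 1 = v.
Proof. exact: scale1r. Qed.

Definition lin_pair (A B C : lmodType S) (f : {linear A -> B}) (g : {linear A -> C}) :
  A -> (B * C)%type := fun a => (f a, g a).

Lemma lin_pair_is_linear (A B C : lmodType S) (f : {linear A -> B}) (g : {linear A -> C}) :
  linear (lin_pair f g).
Proof. by move=> a x y; rewrite /lin_pair !linearP. Qed.

HB.instance Definition _ (A B C : lmodType S) (f : {linear A -> B}) (g : {linear A -> C}) :=
  GRing.isLinear.Build S A (B * C)%type *:%R (lin_pair f g) (lin_pair_is_linear f g).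

Lemma preim_submod (A B : lmodType S) (f : {linear A -> B}) (N : {pred B}) :
  submod_closed N -> submod_closed [pred a | f a \in N].
Proof.
move=> [N0 Nlin]; split=> [|a u v]; first by rewrite inE linear0.
by rewrite !inE linearP; apply: Nlin.
Qed.

Lemma injective_mod_prod (A B : lmodType S) :
  injective_mod A -> injective_mod B -> injective_mod (A * B)%type.
Proof.
move=> injA injB X Y f g f_inj.
have [hA ehA] := injA X Y f (fst \o g) f_inj.
have [hB ehB] := injB X Y f (snd \o g) f_inj.
by exists (lin_pair hA hB) => x; rewrite /= /lin_pair ehA ehB -surjective_pairing.
Qed.

End LinearMaps.

Section MaximalSubmodule.
Variables (S : pzRingType) (M : lmodType S) (A B : {pred M}).
Hypotheses (A_submod : submod_closed A) (B_submod : submod_closed B).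
Hypothesis sAB : {subset A <= B}.
Hypothesis maxAB : forall N : {pred M}, is_submod N ->
  {subset A <= N} -> {subset N <= B} -> N =i A \/ N =i B.
Variable x : M.
Hypotheses (Bx : x \in B) (notAx : x \notin A).

HB.instance Definition _ := GRing.isSubmodClosed.Build S M A A_submod.
HB.instance Definition _ := GRing.isSubmodClosed.Build S M B B_submod.

Definition residual : {pred S^o} := [pred r | scalev x r \in A].

Lemma residual_submod : submod_closed residual.
Proof. exact: preim_submod. Qed.

Definition add_cyclic (J : {pred S^o}) : {pred M} :=
  [pred y | `[< exists a r, [/\ a \in A, r \in J & y = a + scalev x r] >]].

Lemma add_cyclic_maximal (J : {pred S^o}) : submod_closed J ->
  add_cyclic J =i A \/ add_cyclic J =i B.
Proof.
move=> J_submod; apply: maxAB.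
- split=> [|c u v].
    by apply/asboolP; exists 0, 0; rewrite linear0 addr0 rpred0; case: J_submod.
  move=> /asboolP [a [r [Aa Jr ->]]] /asboolP [a' [r' [Aa' Jr' ->]]].
  apply/asboolP; exists (c *: a + a'), (c *: r + r'); split.
  + by rewrite rpredD ?rpredZ.
  + by case: J_submod => _ ->.
  + by rewrite linearP scalerDr addrACA.
- move=> a Aa; apply/asboolP; exists a, 0.
  by rewrite linear0 addr0; case: J_submod.
- move=> _ /asboolP [a [r [Aa _ ->]]].
  by rewrite rpredD ?(sAB Aa) // rpredZ.
Qed.

Lemma maximal_add_cyclic y : y \in B -> exists a r, a \in A /\ y = a + r *: x.
Proof.
have predT_submod : submod_closed (predT : {pred S^o}) by [].
have [eqA|eqB] := add_cyclic_maximal predT_submod.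
  suff : x \in add_cyclic predT by rewrite eqA (negPf notAx).
  by apply/asboolP; exists 0, 1; rewrite rpred0 scalev1 add0r.
by rewrite -eqB => /asboolP [a [r [Aa _ ->]]]; exists a, r.
Qed.

Lemma simple_residual_quotient : simple_mod (quotmod residual_submod).
Proof.
pose q := qproj residual_submod.
split=> [|N N_submod].
  by exists (q 1) => /qproj_eq0; rewrite inE scalev1 (negPf notAx).
have J_submod : submod_closed [pred r | q r \in N] := preim_submod q N_submod.
have [eqA|eqB] := add_cyclic_maximal J_submod; [left|right].
- elim/quotmod_ind=> r Nr; apply/qproj_eq0; rewrite inE -eqA.
  by apply/asboolP; exists 0, r; rewrite rpred0 add0r.
- have : x \in add_cyclic [pred r | q r \in N] by rewrite eqB.
  move=> /asboolP [a [r [Aa Nr ex]]].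
  have Nq1 : q 1 \in N.
    suff -> : q 1 = q r by [].
    by apply/qproj_eqP; rewrite inE linearB /= scalev1 {1}ex addrK.
  elim/quotmod_ind=> s; rewrite -[s]mulr1 -[s * 1]/(s *: (1 : S^o)) linearZ.
  have [N0 Nlin] := N_submod.
  by rewrite -[X in X \in N]addr0 Nlin.
Qed.

End MaximalSubmodule.

Definition injective_cover (S : pzRingType) (M : lmodType S) (A : {pred M}) : Prop :=
  exists (P : lmodType S) (g : {linear P -> M}),
    injective_mod P /\ forall y, y \in A -> exists p, g p = y.

Section ProjectiveInjectiveHull.
Variables (S : pzRingType) (E : lmodType S) (i : {linear S^o -> E}).
Hypotheses (i_inj : injective i) (E_inj : injective_mod E) (E_proj : projective_mod E).

Lemma projective_lift_one (I : {pred S^o}) (I_submod : submod_closed I) :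
  image_of_injective (quotmod I_submod) ->
  exists h : {linear E -> S^o}, h (i 1) - 1 \in I.
Proof.
move=> [E' [f [E'_inj f_surj]]].
have [e fe] := f_surj (qproj I_submod 1).
have [g ge] := E'_inj _ _ i (scalev e) i_inj.
have [h eh] := @E_proj _ _ (qproj I_submod) (f \o g) (fun c => ex_intro _ _ (qprojK c)).
by exists h; apply/qproj_eqP; rewrite eh /= ge -fe; apply: (congr1 f); exact: scale1r.
Qed.

Hypothesis dual_kasch : forall M : lmodType S, simple_mod M -> image_of_injective M.

Lemma injective_cover_maximal (M : lmodType S) (A B : {pred M}) :
  submod_closed A -> submod_closed B -> {subset A <= B} ->
  (exists x, x \in B /\ x \notin A) ->
  (forall N : {pred M}, is_submod N -> {subset A <= N} -> {subset N <= B} ->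
     N =i A \/ N =i B) ->
  injective_cover A -> injective_cover B.
Proof.
move=> A_submod B_submod sAB [x [Bx notAx]] maxAB [P [g [P_inj gA]]].
have [h' Ah'] := projective_lift_one (dual_kasch
  (simple_residual_quotient A_submod B_submod sAB maxAB Bx notAx)).
pose h : {linear E -> M} := scalev x \o h'.
have Ahx : h (i 1) - x \in A by move: Ah'; rewrite inE linearB /= scalev1.
exists (P * E)%type, ((g \o fst) \+ (h \o snd)); split; first exact: injective_mod_prod.
move=> _ /(maximal_add_cyclic A_submod B_submod sAB maxAB Bx notAx) [a [r [Aa ->]]].
have [_ Alin] := A_submod.
have [p gp] : exists p, g p = a - r *: (h (i 1) - x).
  by apply: gA; rewrite addrC -scaleNr Alin.
exists (p, r *: i 1); rewrite /= gp !linearZ /=.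
by rewrite -addrA -scalerDr opprB subrK.
Qed.

Lemma finite_length_image_of_injective (M : lmodType S) :
  finite_length M -> image_of_injective M.
Proof.
move=> [n [s [s_submod s0 sn chain]]].
have cover_s k : (k <= n)%N -> injective_cover (s k).
  elim: k => [_|k IHk lt_kn].
    by exists E, \0; split=> // y /s0 ->; exists 0; rewrite linear0.
  have [sub ex maxk] := chain k lt_kn.
  exact: injective_cover_maximal (s_submod k) (s_submod k.+1) sub ex maxk
    (IHk (ltnW lt_kn)).
have [P [g [P_inj gs]]] := cover_s n (leqnn n).
by exists P, g; split=> // y; apply: gs (sn y).
Qed.

End ProjectiveInjectiveHull.

Lemma simple_finite_length (S : pzRingType) (M : lmodType S) :
  simple_mod M -> finite_length M.
Proof.
move=> [[x nz_x] simpleM].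
exists 1%N, (fun k => [pred y : M | if k is 0%N then y == 0 else true] : {pred M}); split.
- case=> [|k] /=; last by split.
  by split=> [|a u v]; rewrite !inE // => /eqP -> /eqP ->; rewrite scaler0 add0r.
- by move=> y /eqP.
- by [].
- case=> // _; split=> //; first by exists x; split=> //; apply/eqP.
  move=> N N_submod _ _; have [N0|NT] := simpleM N N_submod; [left|right] => y.
  + by rewrite inE; apply/idP/eqP => [/N0 //|->]; case: N_submod.
  + by rewrite NT.
Qed.

Theorem mainTheorem13 (R : nzRingType)
  (hE : exists (E : rmodType R) (i : {linear regular_rmod R -> E}),
          injective_hull i /\ projective_mod E) :
  right_dual_Kasch R <->
  (forall M : rmodType R, finite_length M -> image_of_injective M).
Proof.
have [E [i [[E_inj [i_inj _]] E_proj]]] := hE.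
split=> [dual_kasch M | fl_image M /simple_finite_length].
  exact: finite_length_image_of_injective i_inj E_inj E_proj dual_kasch M.
exact: fl_image.
Qed.
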